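(* Let $A$ and $B$ be automata. (1) If $(f,n)$ is a normed forward simulation from $A$ to $B$, then $f$ is a branching forward simulation from $A$ to $B$. (2) If $f$ is a branching forward simulation from $A$ to $B$, define $n:\mathrm{steps}(A)\times\mathrm{states}(B)\to\mathbb{N}$ by $n(s\xrightarrow{a}t,u)=0$ if $u\notin f[s]$, and otherwise $n(s\xrightarrow{a}t,u)$ is the minimal length (number of steps) of an execution fragment of $B$ starting in $u$ that is $f$-related to the execution fragment $s\,a\,t$ of $A$. Then $(f,n)$ is a normed forward simulation from $A$ to $B$ (with $\mathbb{N}$ ordered by $<$).
   Context: An automaton $A$ consists of a set $\mathrm{states}(A)$ of states, a nonempty set $\mathrm{start}(A)\subseteq\mathrm{states}(A)$ of start states, a set $\mathrm{acts}(A)$ of actions containing a distinguished internal action $\tau$, and a set $\mathrm{steps}(A)\subseteq\mathrm{states}(A)\times\mathrm{acts}(A)\times\mathrm{states}(A)$ of steps; write $s\xrightarrow{a}_A t$ for $(s,a,t)\in\mathrm{steps}(A)$. An execution fragment of $A$ is a finite or infinite alternating sequence $s_0a_1s_1a_2s_2\cdots$ of states and actions, beginning with a state and, if finite, ending with a state, such that $s_{i-1}\xrightarrow{a_i}_A s_i$ for all $i>0$; its index set $\mathrm{Index}(\alpha)$ is the set of indices $i$ of its states $s_i$. An execution is an execution fragment whose first state is a start state. For a relation $R$ write $R[s]=\{u\mid (s,u)\in R\}$. Execution correspondence: Let $R\subseteq\mathrm{states}(A)\times\mathrm{states}(B)$ and let $\alpha=s_0a_1s_1\cdots$ and $\alpha'=u_0b_1u_1\cdots$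 be execution fragments of $A$ and $B$. An index relation over $R$ between $\alpha$ and $\alpha'$ is a relation $I\subseteq\mathrm{Index}(\alpha)\times\mathrm{Index}(\alpha')$ such that (1) $(i,j)\in I$ implies $(s_i,u_j)\in R$; (2) $(i,j)\in I$, $(i',j')\in I$ and $i<i'$ imply $j\le j'$; (3) every index of $\alpha$ is related by $I$ to some index of $\alpha'$ and every index of $\alpha'$ is related by $I$ to some index of $\alpha$; (4) if $(i,j),(i+1,j+1)\in I$ then $a_{i+1}=b_{j+1}$; if $(i,j),(i+1,j)\in I$ then $a_{i+1}=\tau$; if $(i,j),(i,j+1)\in I$ then $b_{j+1}=\tau$. The fragments $\alpha,\alpha'$ are $R$-related, written $(\alpha,\alpha')\in R$, if such an $I$ exists. A normed forward simulation from $A$ to $B$ is a pair $(f,n)$ where $f\subseteq\mathrm{states}(A)\times\mathrm{states}(B)$ and $n:\mathrm{steps}(A)\times\mathrm{states}(B)\to S$ for some set $S$ with a well-founded strict order $<$, such that: (1) if $s\in\mathrm{start}(A)$ then $f[s]\cap\mathrm{start}(B)\neq\emptyset$; (2) if $s\xrightarrow{a}_A t$ and $u\in f[s]$ then (a) $u\in f[t]$ and $a=\tau$, or (b) there is $v\in f[t]$ with $u\xrightarrow{a}_B v$, or (c) there is $v\in f[s]$ with $u\xrightarrow{\tau}_B v$ and $n(s\xrightarrow{a}t,v)<n(s\xrightarrow{a}t,u)$. A branching forward simulation from $A$ to $B$ is a relation $f\subseteq\mathrm{states}(A)\times\mathrm{states}(B)$ such that (1) if $s\in\mathrm{start}(A)$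 then $f[s]\cap\mathrm{start}(B)\neq\emptyset$; (2) if $s\xrightarrow{a}_A t$ and $u\in f[s]$ then $B$ has an execution fragment that starts in $u$ and is $f$-related to the execution fragment $s\,a\,t$ of $A$. *)

From Stdlib Require Import Arith Classical ClassicalEpsilon.

Set Implicit Arguments.

(* Automata over a common universe of actions [Act]; the internal action
   tau : Act is passed explicitly wherever needed. *)
Record automaton (Act : Type) := Automaton {
  state : Type;
  start : state -> Prop;
  step : state -> Act -> state -> Prop;
  start_nonempty : exists s, start s
}.

Arguments state {Act} a.
Arguments start {Act} a _.
Arguments step {Act} a _ _ _.

(* A (finite or infinite) alternating sequence s0 a1 s1 a2 s2 ...
   flen = Some n : finite with states s_0..s_n (n steps);
   flen = None   : infinite.
   fstate i = s_i, fact i = a_i (i >= 1); values outside the index set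
   are irrelevant junk. *)
Record frag (Act S : Type) := Frag {
  flen : option nat;
  fstate : nat -> S;
  fact : nat -> Act
}.

Arguments flen {Act S} _.
Arguments fstate {Act S} _ _.
Arguments fact {Act S} _ _.

Definition inIndex {Act S : Type} (al : frag Act S) (i : nat) : Prop :=
  match flen al with Some n => i <= n | None => True end.

Definition is_exec_frag {Act : Type} (A : automaton Act) (al : frag Act (state A)) : Prop :=
  forall i, inIndex al (S i) -> step A (fstate al i) (fact al (S i)) (fstate al (S i)).

Definition index_rel {Act SA SB : Type} (tau : Act) (R : SA -> SB -> Prop)
  (al : frag Act SA) (al' : frag Act SB) (I : nat -> nat -> Prop) : Prop :=
  (forall i j, I i j -> inIndex al i /\ inIndex al' j) /\
  (forall i j, I i j -> R (fstate al i) (fstate al' j)) /\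
  (forall i j i' j', I i j -> I i' j' -> i < i' -> j <= j') /\
  (forall i, inIndex al i -> exists j, I i j) /\
  (forall j, inIndex al' j -> exists i, I i j) /\
  (forall i j, I i j -> I (S i) (S j) -> fact al (S i) = fact al' (S j)) /\
  (forall i j, I i j -> I (S i) j -> fact al (S i) = tau) /\
  (forall i j, I i j -> I i (S j) -> fact al' (S j) = tau).

Definition R_related {Act SA SB : Type} (tau : Act) (R : SA -> SB -> Prop)
  (al : frag Act SA) (al' : frag Act SB) : Prop :=
  exists I, index_rel tau R al al' I.

Definition step_frag {Act S : Type} (s : S) (a : Act) (t : S) : frag Act S :=
  Frag (Some 1) (fun i => match i with 0 => s | _ => t end) (fun _ => a).

(* Normed forward simulation (f, n) with n valued in a set Sn carrying a
   well-founded strict order lt. n is defined on steps(A) x states(B). *)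
Definition normed_fwd_sim {Act : Type} (tau : Act) (A B : automaton Act)
  (f : state A -> state B -> Prop) (Sn : Type) (lt : Sn -> Sn -> Prop)
  (n : forall s a t, step A s a t -> state B -> Sn) : Prop :=
  (forall x, ~ lt x x) /\ (forall x y z, lt x y -> lt y z -> lt x z) /\
  well_founded lt /\
  (forall s, start A s -> exists u, f s u /\ start B u) /\
  (forall s a t (H : step A s a t) u, f s u ->
     (f t u /\ a = tau) \/
     (exists v, f t v /\ step B u a v) \/
     (exists v, f s v /\ step B u tau v /\ lt (n s a t H v) (n s a t H u))).

Definition branching_fwd_sim {Act : Type} (tau : Act) (A B : automaton Act)
  (f : state A -> state B -> Prop) : Prop :=
  (forall s, start A s -> exists u, f s u /\ start B u) /\
  (forall s a t u, step A s a t -> f s u ->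
     exists be : frag Act (state B),
       is_exec_frag B be /\ fstate be 0 = u /\
       R_related tau f (step_frag s a t) be).

Definition minlen_spec {Act : Type} (tau : Act) (A B : automaton Act)
  (f : state A -> state B -> Prop) (s : state A) (a : Act) (t : state A)
  (u : state B) (k : nat) : Prop :=
  (exists be : frag Act (state B), is_exec_frag B be /\ fstate be 0 = u /\
     flen be = Some k /\ R_related tau f (step_frag s a t) be) /\
  (forall (be : frag Act (state B)) m, is_exec_frag B be -> fstate be 0 = u ->
     flen be = Some m -> R_related tau f (step_frag s a t) be -> k <= m).

Definition n_branch {Act : Type} (tau : Act) (A B : automaton Act)
  (f : state A -> state B -> Prop) (s : state A) (a : Act) (t : state A)
  (u : state B) : nat :=
  if excluded_middle_informative (f s u)
  then epsilon (inhabits 0) (minlen_spec tau A B f s a t u)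
  else 0.

(* (1) By well-founded induction on the norm: from u in f[s], B either matches
   the step s -a-> t at once (cases (a), (b)) or makes a tau-step to some
   v in f[s] of smaller norm, from which a related fragment exists; prefixing
   the tau-step gives one from u.
   (2) Any related fragment can be cut off at the index matched with t, so a
   shortest one exists.  If it is nonempty, its first step is either the
   visible matching step, or a tau-step into f[s] whose tail is a related
   fragment one step shorter, i.e. the norm strictly decreases. *)

From Stdlib Require Import Arith Lia Wf_nat ClassicalEpsilon.

Lemma inIndex_0 {Act St : Type} (al : frag Act St) : inIndex al 0.
Proof. unfold inIndex; destruct (flen al); [lia | exact I]. Qed.

Lemma inIndex_le {Act St : Type} (al : frag Act St) i j :
  inIndex al j -> i <= j -> inIndex al i.
Proof. unfold inIndex; destruct (flen al); [lia | trivial]. Qed.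

Section IndexRelation.
Variables (Act SA SB : Type) (tau : Act) (R : SA -> SB -> Prop).
Variables (al : frag Act SA) (al' : frag Act SB) (I : nat -> nat -> Prop).
Hypothesis HI : index_rel tau R al al' I.

Lemma index_rel_first : I 0 0.
Proof.
  destruct HI as (_ & _ & Hmono & Hl & Hr & _).
  destruct (Hl 0 (inIndex_0 al)) as [[|j] Hj]; [exact Hj|].
  destruct (Hr 0 (inIndex_0 al')) as [[|i] Hi]; [exact Hi|].
  pose proof (Hmono _ _ _ _ Hj Hi (Nat.lt_0_succ i)); lia.
Qed.

Lemma index_rel_last n m : flen al = Some n -> flen al' = Some m -> I n m.
Proof.
  intros Hn Hm. destruct HI as (Hdom & _ & Hmono & Hl & Hr & _).
  destruct (Hl n) as [j Hj]; [unfold inIndex; rewrite Hn; lia|].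
  destruct (Hr m) as [i Hi]; [unfold inIndex; rewrite Hm; lia|].
  destruct (Hdom _ _ Hj) as [_ Hjm]; destruct (Hdom _ _ Hi) as [Hin _].
  unfold inIndex in Hjm, Hin; rewrite Hm in Hjm; rewrite Hn in Hin.
  destruct (Nat.eq_dec i n) as [<- | Hne]; [exact Hi|].
  replace m with j; [exact Hj|].
  pose proof (Hmono _ _ _ _ Hi Hj ltac:(lia)); lia.
Qed.

End IndexRelation.

Arguments index_rel_first {Act SA SB tau R al al' I} HI.
Arguments index_rel_last {Act SA SB tau R al al' I} HI n m.

Section Fragments.
Variables (Act St : Type) (tau : Act).

Definition frag_nil (u : St) : frag Act St := Frag (Some 0) (fun _ => u) (fun _ => tau).

Definition frag_cons (u : St) (be : frag Act St) : frag Act St :=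
  Frag (option_map S (flen be))
       (fun i => match i with 0 => u | S i => fstate be i end)
       (fun j => match j with S (S j) => fact be (S j) | _ => tau end).

Definition frag_tail (be : frag Act St) : frag Act St :=
  Frag (option_map pred (flen be)) (fun j => fstate be (S j)) (fun j => fact be (S j)).

Definition frag_prefix (be : frag Act St) (m : nat) : frag Act St :=
  Frag (Some m) (fstate be) (fact be).

Lemma inIndex_cons u be j : inIndex (frag_cons u be) (S j) <-> inIndex be j.
Proof. unfold inIndex; cbn; destruct (flen be); cbn; [lia | tauto]. Qed.

Lemma inIndex_tail be j : inIndex be 1 -> (inIndex (frag_tail be) j <-> inIndex be (S j)).
Proof. unfold inIndex; cbn; destruct (flen be); cbn; [lia | tauto]. Qed.

End Fragments.

Arguments frag_nil {Act St} tau u.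
Arguments frag_cons {Act St} tau u be.
Arguments frag_tail {Act St} be.
Arguments frag_prefix {Act St} be m.
Arguments inIndex_cons {Act St} tau u be j.
Arguments inIndex_tail {Act St} be j.

Section Executions.
Variables (Act : Type) (tau : Act) (B : automaton Act).

Lemma exec_frag_nil u : is_exec_frag B (frag_nil tau u).
Proof. intros i Hi; cbn in Hi; lia. Qed.

Lemma exec_step_frag u a v : step B u a v -> is_exec_frag B (step_frag u a v).
Proof. intros Huv [|i] Hi; [exact Huv | cbn in Hi; lia]. Qed.

Lemma exec_frag_cons u be :
  step B u tau (fstate be 0) -> is_exec_frag B be -> is_exec_frag B (frag_cons tau u be).
Proof.
  intros Hu Hbe [|i] Hi; [exact Hu|].
  apply (Hbe i), (inIndex_cons tau u); exact Hi.
Qed.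

Lemma exec_frag_tail be : inIndex be 1 -> is_exec_frag B be -> is_exec_frag B (frag_tail be).
Proof.
  intros H1 Hbe i Hi. apply (Hbe (S i)), inIndex_tail; assumption.
Qed.

Lemma exec_frag_prefix be m :
  inIndex be m -> is_exec_frag B be -> is_exec_frag B (frag_prefix be m).
Proof.
  intros Hm Hbe i Hi. apply Hbe, (inIndex_le _ _ _ Hm), Hi.
Qed.

End Executions.

Arguments exec_frag_tail {Act B be} H1 Hbe.

Ltac split_index_rel :=
  refine (conj _ (conj _ (conj _ (conj _ (conj _ (conj _ (conj _ _))))))).

Section StepRelated.
Variables (Act SA SB : Type) (tau : Act) (f : SA -> SB -> Prop).
Variables (s : SA) (a : Act) (t : SA).

Notation related := (R_related tau f (step_frag s a t)).

Lemma related_nil u : a = tau -> f s u -> f t u -> related (frag_nil tau u).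
Proof.
  intros Ha Hs Ht. exists (fun i j => i <= 1 /\ j = 0).
  split_index_rel; cbn.
  - intros i j [Hi ->]; split; [exact Hi | lia].
  - intros [|[|i]] j [Hi _]; [exact Hs | exact Ht | lia].
  - intros i j i' j' [_ ->] [_ ->]; lia.
  - intros i Hi; exists 0; lia.
  - intros j Hj; exists 0; lia.
  - intros i j _ [_ Hj]; discriminate.
  - intros i j _ _; exact Ha.
  - intros i j _ [_ Hj]; discriminate.
Qed.

Lemma related_step_frag u v : f s u -> f t v -> related (step_frag u a v).
Proof.
  intros Hs Ht. exists (fun i j => i <= 1 /\ i = j).
  split_index_rel; cbn.
  - intros i j [Hi <-]; split; exact Hi.
  - intros [|[|i]] j [Hi <-]; [exact Hs | exact Ht | lia].
  - intros i j i' j' [_ <-] [_ <-]; lia.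
  - intros i Hi; exists i; lia.
  - intros j Hj; exists j; lia.
  - reflexivity.
  - intros i j [_ <-] [_ Hj]; lia.
  - intros i j [_ <-] [_ Hj]; lia.
Qed.

Lemma related_cons u be : f s u -> related be -> related (frag_cons tau u be).
Proof.
  intros Hu [I HI]. pose proof (index_rel_first HI) as H00.
  destruct HI as (Hdom & HR & Hmono & Hl & Hr & Hvis & Hleft & Hright).
  exists (fun i j => match j with 0 => i = 0 | S j => I i j end).
  split_index_rel.
  - intros i [|j] Hij; [subst; split; apply inIndex_0|].
    destruct (Hdom _ _ Hij); split; [|apply inIndex_cons]; assumption.
  - intros i [|j] Hij; [subst; exact Hu | exact (HR _ _ Hij)].
  - intros i [|j] i' [|j'] Hij Hij' Hlt; subst; try lia.
    pose proof (Hmono _ _ _ _ Hij Hij' Hlt); lia.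
  - intros i Hi. destruct (Hl i Hi) as [j Hj]. exists (S j); exact Hj.
  - intros [|j] Hj; [exists 0; reflexivity|].
    apply (Hr j), (inIndex_cons tau u); exact Hj.
  - intros i [|j] Hij HS; cbn.
    + subst i. exact (Hleft _ _ H00 HS).
    + exact (Hvis _ _ Hij HS).
  - intros i [|j] Hij HS; [discriminate | exact (Hleft _ _ Hij HS)].
  - intros i [|j] Hij HS; [reflexivity | exact (Hright _ _ Hij HS)].
Qed.

Section Inversion.
Variables (be : frag Act SB) (I : nat -> nat -> Prop).
Hypothesis HI : index_rel tau f (step_frag s a t) be I.

Lemma related_prefix m : I 1 m -> related (frag_prefix be m).
Proof.
  intros H1m. pose proof (index_rel_first HI) as H00.
  destruct HI as (Hdom & HR & Hmono & Hl & Hr & Hvis & Hleft & Hright).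
  exists (fun i j => I i j /\ j <= m).
  split_index_rel; cbn.
  - intros i j [Hij Hjm]; split; [exact (proj1 (Hdom _ _ Hij)) | exact Hjm].
  - intros i j [Hij _]; exact (HR _ _ Hij).
  - intros i j i' j' [Hij _] [Hij' _]; exact (Hmono _ _ _ _ Hij Hij').
  - intros [|[|i]] Hi; cbn in Hi; [| exists m; auto | lia].
    exists 0; split; [exact H00 | lia].
  - intros j Hj. destruct (Hr j) as [i Hij]; [|exists i; auto].
    apply (inIndex_le _ _ m); [exact (proj2 (Hdom _ _ H1m)) | exact Hj].
  - intros i j [Hij _] [HS _]; exact (Hvis _ _ Hij HS).
  - intros i j [Hij _] [HS _]; exact (Hleft _ _ Hij HS).
  - intros i j [Hij _] [HS _]; exact (Hright _ _ Hij HS).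
Qed.

Lemma related_nil_inv : flen be = Some 0 -> a = tau /\ f t (fstate be 0).
Proof.
  intros Hlen. pose proof (index_rel_first HI) as H00.
  pose proof (index_rel_last HI 1 0 eq_refl Hlen) as H10.
  destruct HI as (_ & HR & _ & _ & _ & _ & Hleft & _).
  split; [exact (Hleft _ _ H00 H10) | exact (HR _ _ H10)].
Qed.

Lemma related_tail : I 0 1 -> related (frag_tail be).
Proof.
  intros H01.
  destruct HI as (Hdom & HR & Hmono & Hl & Hr & Hvis & Hleft & Hright).
  assert (H1 : inIndex be 1) by exact (proj2 (Hdom _ _ H01)).
  exists (fun i j => I i (S j)).
  split_index_rel; cbn.
  - intros i j Hij. destruct (Hdom _ _ Hij).
    split; [|apply inIndex_tail]; assumption.
  - intros i j Hij; exact (HR _ _ Hij).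
  - intros i j i' j' Hij Hij' Hlt; pose proof (Hmono _ _ _ _ Hij Hij' Hlt); lia.
  - intros [|[|i]] Hi; cbn in Hi; [exists 0; exact H01 | | lia].
    destruct (Hl 1) as [[|j] Hj]; [cbn; lia | | exists j; exact Hj].
    pose proof (Hmono _ _ _ _ H01 Hj (Nat.lt_0_1)); lia.
  - intros j Hj. apply (Hr (S j)), inIndex_tail; assumption.
  - intros i j Hij HS; exact (Hvis _ _ Hij HS).
  - intros i j Hij HS; exact (Hleft _ _ Hij HS).
  - intros i j Hij HS; exact (Hright _ _ Hij HS).
Qed.

Lemma related_first_step :
  inIndex be 1 ->
  (fact be 1 = a /\ f t (fstate be 1)) \/
  (fact be 1 = tau /\ f s (fstate be 1) /\ related (frag_tail be)).
Proof.
  intros H1. pose proof (index_rel_first HI) as H00.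
  destruct (classic (I 0 1)) as [H01 | H01].
  - right. destruct HI as (_ & HR & _ & _ & _ & _ & _ & Hright).
    split; [exact (Hright _ _ H00 H01)|].
    split; [exact (HR _ _ H01) | exact (related_tail H01)].
  - left. destruct HI as (Hdom & HR & _ & _ & Hr & Hvis & _ & _).
    destruct (Hr 1 H1) as [[|[|i]] Hi]; [contradiction | |].
    + split; [symmetry; exact (Hvis _ _ H00 Hi) | exact (HR _ _ Hi)].
    + destruct (Hdom _ _ Hi) as [Hi' _]; cbn in Hi'; lia.
Qed.

End Inversion.
End StepRelated.

Arguments related_prefix {Act SA SB tau f s a t be I} HI m.
Arguments related_nil_inv {Act SA SB tau f s a t be I} HI.
Arguments related_first_step {Act SA SB tau f s a t be I} HI.

Section NormedToBranching.
Variables (Act : Type) (tau : Act) (A B : automaton Act) (f : state A -> state B -> Prop).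
Variables (Sn : Type) (lt : Sn -> Sn -> Prop) (n : forall s a t, step A s a t -> state B -> Sn).
Hypothesis Hsim : normed_fwd_sim tau A B f lt n.

Lemma normed_fwd_sim_related_exec s a t (Hst : step A s a t) u :
  f s u -> exists be, is_exec_frag B be /\ fstate be 0 = u /\
                      R_related tau f (step_frag s a t) be.
Proof.
  destruct Hsim as (_ & _ & Hwf & _ & Hstep).
  remember (n s a t Hst u) as x eqn:Hx. revert u Hx.
  induction x as [x IH] using (well_founded_induction Hwf). intros u -> Hu.
  destruct (Hstep s a t Hst u Hu) as [[Ht ->] | [[v [Hv Huv]] | [v [Hv [Huv Hlt]]]]].
  - exists (frag_nil tau u).
    split; [apply exec_frag_nil | split; [reflexivity | apply related_nil; auto]].
  - exists (step_frag u a v).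
    split; [apply exec_step_frag, Huv | split; [reflexivity | apply related_step_frag; auto]].
  - destruct (IH _ Hlt v eq_refl Hv) as (be & Hbe & <- & Hrel).
    exists (frag_cons tau u be).
    split; [apply exec_frag_cons; assumption | split; [reflexivity | apply related_cons; assumption]].
Qed.

Lemma normed_fwd_sim_branching : branching_fwd_sim tau A B f.
Proof.
  split; [exact (proj1 (proj2 (proj2 (proj2 Hsim)))) |].
  intros s a t u Hst Hu; exact (normed_fwd_sim_related_exec s a t Hst u Hu).
Qed.

End NormedToBranching.

Section BranchingToNormed.
Variables (Act : Type) (tau : Act) (A B : automaton Act) (f : state A -> state B -> Prop).

Lemma n_branch_spec s a t u :
  f s u ->
  (exists be, is_exec_frag B be /\ fstate be 0 = u /\ R_related tau f (step_frag s a t) be) ->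
  minlen_spec tau A B f s a t u (n_branch tau A B f s a t u).
Proof.
  intros Hu (be & Hbe & Hbe0 & [I HI]).
  set (P k := exists be, is_exec_frag B be /\ fstate be 0 = u /\ flen be = Some k /\
                         R_related tau f (step_frag s a t) be).
  assert (Hfinite : exists m, P m).
  { pose proof HI as (Hdom & _ & _ & Hl & _).
    destruct (Hl 1) as [m Hm]; [cbn; lia |].
    exists m, (frag_prefix be m).
    split; [apply exec_frag_prefix; [exact (proj2 (Hdom _ _ Hm)) | exact Hbe] |].
    split; [exact Hbe0 | split; [reflexivity | exact (related_prefix HI m Hm)]]. }
  destruct (dec_inh_nat_subset_has_unique_least_element P (fun k => classic (P k)) Hfinite)
    as (k & [Pk Hk] & _).
  unfold n_branch; destruct (excluded_middle_informative (f s u)) as [_ | Hnot]; [| contradiction].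
  apply epsilon_spec. exists k. split; [exact Pk |].
  intros b m Hb Hb0 Hbm Hbrel. apply Hk. exists b; auto.
Qed.

Arguments n_branch_spec {s a t u} Hu Hex.

Lemma branching_fwd_sim_normed :
  branching_fwd_sim tau A B f ->
  normed_fwd_sim tau A B f Nat.lt (fun s a t (_ : step A s a t) u => n_branch tau A B f s a t u).
Proof.
  intros [Hstart Hstep].
  split; [exact Nat.lt_irrefl | split; [exact Nat.lt_trans | split; [exact lt_wf |]]].
  split; [exact Hstart |]. intros s a t Hst u Hu; cbn.
  destruct (n_branch_spec Hu (Hstep s a t u Hst Hu))
    as [(be & Hbe & <- & Hlen & [I HI]) _].
  destruct (n_branch tau A B f s a t (fstate be 0)) as [| k].
  - left. destruct (related_nil_inv HI Hlen) as [Ha Ht]. split; assumption.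
  - assert (H1 : inIndex be 1) by (unfold inIndex; rewrite Hlen; lia).
    pose proof (Hbe 0 H1) as Hstep1.
    destruct (related_first_step HI H1) as [[Ha Ht] | (Htau & Hs1 & Htail)].
    + right; left. exists (fstate be 1). rewrite Ha in Hstep1. split; assumption.
    + right; right. exists (fstate be 1). rewrite Htau in Hstep1.
      split; [exact Hs1 | split; [exact Hstep1 |]].
      (* The tail of the minimal fragment is related and one step shorter. *)
      destruct (n_branch_spec Hs1 (ex_intro _ (frag_tail be)
                  (conj (exec_frag_tail H1 Hbe) (conj eq_refl Htail)))) as [_ Hmin].
      specialize (Hmin (frag_tail be) k (exec_frag_tail H1 Hbe) eq_refl); cbn in Hmin.
      rewrite Hlen in Hmin. specialize (Hmin eq_refl Htail). lia.
Qed.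

End BranchingToNormed.

Theorem mainTheorem8 (Act : Type) (tau : Act) (A B : automaton Act) :
  (forall (f : state A -> state B -> Prop) (Sn : Type) (lt : Sn -> Sn -> Prop)
          (n : forall s a t, step A s a t -> state B -> Sn),
      normed_fwd_sim tau A B f lt n -> branching_fwd_sim tau A B f) /\
  (forall f : state A -> state B -> Prop,
      branching_fwd_sim tau A B f ->
      normed_fwd_sim tau A B f Nat.lt
        (fun s a t (_ : step A s a t) u => n_branch tau A B f s a t u)).
Proof.
  split.
  - intros f Sn lt n; apply normed_fwd_sim_branching.
  - intros f; apply branching_fwd_sim_normed.
Qed.
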